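(* Let $\mathcal{T}$ be a single-elimination tournament with at least $2$ vertices and $\widehat{B}$ a bracket of $\mathcal{T}$. Let $a,b$ be distinct players such that the unique out-neighbour $x_a$ of $a$ satisfies $b\in\{\widehat{B}(v):v\in N^-(x_a)\}$. Then for any brackets $B,B'$ and any scoring system $\sigma$ with $\mathrm{score}_\sigma(\widehat{B}_a,B)=\mathrm{score}_\sigma(\widehat{B}_a,B')$ and $\mathrm{score}_\sigma(\widehat{B}_b,B)=\mathrm{score}_\sigma(\widehat{B}_b,B')$, we have for all $x\in M(\mathcal{T})$ that $B(x)=a$ if and only if $B'(x)=a$.
   Context: A single-elimination tournament is a finite directed graph $\mathcal{T}$ such that: (a) $\mathcal{T}$ has exactly one sink (vertex with no out-neighbours); (b) every non-sink vertex has exactly one out-neighbour; (c) $\mathcal{T}$ has no directed cycles; (d) $|N^-(v)|\ne 1$ for every vertex $v$, where $N^-(v)$ denotes the set of in-neighbours of $v$. The players $P(\mathcal{T})$ are the sources and the matches are $M(\mathcal{T})=V(\mathcal{T})\setminus P(\mathcal{T})$. For a vertex $u$, $P(u)$ is the set of players $c$ for which there is a directed walk from $c$ to $u$ (length $0$ allowed). A bracket is a function $B:V(\mathcal{T})\to P(\mathcal{T})$ with $B(c)=c$ for every player $c$ and $B(x)\in\{B(u):u\in N^-(x)\}$ for every match $x$. For a bracket $\widehat{B}$ and player $c$, $\widehat{B}_c$ is the bracket with $\widehat{B}_c(u)=c$ if $c\in P(u)$ and $\widehat{B}_c(u)=\widehat{B}(u)$ otherwise. A scoring system is any function $\sigma:M(\mathcal{T})\to\mathbb{R}_{>0}$,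 and $\mathrm{score}_\sigma(B,B')=\sum_{x\in M(\mathcal{T}):\,B(x)=B'(x)}\sigma(x)$. *)

From HB Require Import structures.
From mathcomp Require Import all_boot all_order all_algebra.
Set Implicit Arguments. Unset Strict Implicit. Unset Printing Implicit Defensive.
Import Order.TTheory GRing.Theory Num.Theory.

Section Tournament.
Variables (V : finType) (e : rel V).

Definition Nout (v : V) : {set V} := [set w | e v w].
Definition Nin (v : V) : {set V} := [set u | e u v].

Definition is_sink (v : V) : bool := Nout v == set0.

Definition single_elim : Prop :=
  [/\ #|[set v | is_sink v]| = 1,
      (forall v, ~~ is_sink v -> #|Nout v| = 1),
      (* (c) no directed cycles (walks of positive length from v back to v) *)
      (forall u v, e u v -> ~~ connect e v u) &
      (forall v, #|Nin v| != 1)].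

Definition is_player (v : V) : bool := Nin v == set0.
Definition is_match (v : V) : bool := ~~ is_player v.

Definition Pl (u : V) : {set V} := [set c | is_player c & connect e c u].

Definition is_bracket (B : V -> V) : Prop :=
  [/\ (forall v, is_player (B v)),
      (forall c, is_player c -> B c = c) &
      (forall x, is_match x -> B x \in [set B u | u in Nin x])].

Definition bracket_force (Bh : V -> V) (c : V) : V -> V :=
  fun u => if c \in Pl u then c else Bh u.

Definition score (R : numDomainType) (sigma : V -> R) (B B' : V -> V) : R :=
  (\sum_(x | is_match x && (B x == B' x)) sigma x)%R.

End Tournament.

(* Only matches above a can tell the two forced brackets apart, so
   score(B^_a, B) - score(B^_b, B) is the weight of the matches above a won by a
   in B minus the weight of those won by b.  Both kinds lie above x_a, whose
   winner they would then be, so at most one sum is nonzero.  The matches won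
   by a form an initial segment of the path from a to the sink; if B and B'
   disagree on a match x where B crowns a, then B' crowns a on strictly fewer
   matches above a, and the two score equations give a contradiction. *)
From mathcomp Require Import all_boot all_order all_algebra.
Import Order.TTheory GRing.Theory Num.Theory.
Set Implicit Arguments. Unset Strict Implicit. Unset Printing Implicit Defensive.

Section SingleElimination.
Variables (V : finType) (e : rel V).

Lemma connect_step u y :
  connect e u y -> u = y \/ exists2 w, e u w & connect e w y.
Proof.
case/connectP => [[|w p]] /=; first by move=> _ ->; left.
by case/andP => euw pw ly; right; exists w => //; apply/connectP; exists p.
Qed.

Lemma match_neq_player a x : is_player e a -> is_match e x -> x != a.
Proof. by move=> Ha; apply: contraL => /eqP ->; rewrite /is_match Ha. Qed.

Hypothesis HT : single_elim e.

Lemma out_nbr_uniq u w1 w2 : e u w1 -> e u w2 -> w1 = w2.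
Proof.
case: HT => _ Hout _ _ euw1 euw2.
have /cards1P [z Hz] : #|Nout e u| == 1.
  by apply/eqP/Hout; apply/set0Pn; exists w1; rewrite inE.
have : w1 \in Nout e u by rewrite inE.
have : w2 \in Nout e u by rewrite inE.
by rewrite Hz !inE => /eqP -> /eqP ->.
Qed.

Lemma no_connect_back u v : e u v -> ~~ connect e v u.
Proof. by case: HT => _ _ Hacyc _; apply: Hacyc. Qed.

Lemma connect_out u w y : connect e u y -> e u w -> u = y \/ connect e w y.
Proof.
move=> /connect_step [->|[w' euw' cw'y]] euw; first by left.
by right; rewrite (out_nbr_uniq euw euw').
Qed.

Lemma connect_out_match a xa y :
  is_player e a -> e a xa -> is_match e y -> connect e a y -> connect e xa y.
Proof.
move=> Ha eaxa ym /connect_out /(_ eaxa) [ay|//].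
by move: (match_neq_player Ha ym); rewrite ay eqxx.
Qed.

(* Each vertex has a single way down to the sink, so everything reachable
   from c lies on one path. *)
Lemma connect_comparable c x y :
  connect e c x -> connect e c y -> connect e x y || connect e y x.
Proof.
move/connectP => [p Hp ->].
elim: p c Hp y => [|w p IH] c /=; first by move=> _ y ->.
case/andP => ecw Hp y /connect_step [<-|[w' ecw' cw'y]].
  by apply/orP; right; apply/connectP; exists (w :: p) => //=; rewrite ecw.
by apply: IH; rewrite // (out_nbr_uniq ecw ecw').
Qed.

Lemma in_nbr_connect_uniq c u x w :
  e u w -> e x w -> connect e c u -> connect e c x -> u = x.
Proof.
move=> euw exw cu cx; case/orP: (connect_comparable cu cx) => [cux|cxu].
  case: (connect_out cux euw) => // cwx.
  by move: (no_connect_back exw); rewrite cwx.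
case: (connect_out cxu exw) => [->|cwu] //.
by move: (no_connect_back euw); rewrite cwu.
Qed.

Section Bracket.
Variable B : V -> V.
Hypothesis HB : is_bracket e B.

Lemma bracket_connect v : connect e (B v) v.
Proof.
have [_ Bplayer Bmatch] := HB.
(* Induction on the number of vertices reaching v, which drops along every arc
   by acyclicity. *)
elim: {v}_.+1 {-2}v (ltnSn #|[set w | connect e w v]|) => // n IH v.
rewrite ltnS => Hn; case: (boolP (is_match e v)) => vm; last first.
  by rewrite Bplayer ?connect0 // -[is_player _ _]negbK.
case/imsetP: (Bmatch v vm) => u; rewrite inE => euv ->.
apply: connect_trans (IH u _) (connect1 euv).
apply: leq_trans Hn; apply: proper_card; apply/properP; split.
  by apply/subsetP => w; rewrite !inE => /connect_trans; apply; apply: connect1.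
by exists v; rewrite !inE ?connect0 // (negbTE (no_connect_back euv)).
Qed.

Lemma bracket_down c v x :
  B v = c -> connect e x v -> connect e c x -> B x = c.
Proof.
move=> Bv /connectP [p Hp vE]; subst v.
elim: p x Hp Bv => [|w p IH] x /=; first by move=> _ ->.
case/andP => exw Hp Bv cx.
have Bw : B w = c := IH w Hp Bv (connect_trans cx (connect1 exw)).
have wm : is_match e w by apply/set0Pn; exists x; rewrite inE.
have [_ _ Bmatch] := HB.
case/imsetP: (Bmatch w wm) => u; rewrite inE => euw Bu.
have cu : connect e c u by rewrite -Bw Bu bracket_connect.
by rewrite -(in_nbr_connect_uniq euw exw cu cx) -Bu.
Qed.

End Bracket.

Section Duel.
Local Open Scope ring_scope.
Variables (Bh : V -> V) (a b v xa : V).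
Hypotheses (HBh : is_bracket e Bh) (Ha : is_player e a) (Hb : is_player e b).
Hypotheses (Hab : a != b) (eaxa : e a xa) (evxa : e v xa) (Bhv : Bh v = b).

Lemma connect_b_xa : connect e b xa.
Proof. by rewrite -Bhv (connect_trans (bracket_connect HBh v)) ?connect1. Qed.

Lemma force_b_above_a x :
  is_match e x -> connect e a x -> bracket_force e Bh b x = b.
Proof.
move=> xm cax; rewrite /bracket_force /Pl inE Hb /=.
by rewrite (connect_trans connect_b_xa) // (connect_out_match Ha eaxa).
Qed.

Lemma force_off_a x :
  ~~ connect e a x -> bracket_force e Bh a x = bracket_force e Bh b x.
Proof.
move=> ncax; rewrite /bracket_force /Pl !inE Ha Hb (negbTE ncax) /=.
case: ifP => // cbx; have cbv : connect e b v by rewrite -Bhv bracket_connect.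
case/orP: (connect_comparable cbv cbx) => [cvx|]; last first.
  by move/(bracket_down HBh Bhv); apply.
case: (connect_out cvx evxa) => [<- //|cxax].
by rewrite (connect_trans (connect1 eaxa) cxax) in ncax.
Qed.

Lemma no_b_win_above_a (B : V -> V) x y :
  is_bracket e B -> is_match e x -> B x = a ->
  is_match e y -> connect e a y -> B y != b.
Proof.
move=> HB xm Bx ym cay; apply/eqP => By.
have cax : connect e a x by rewrite -{1}Bx bracket_connect.
have Bxa_a := bracket_down HB Bx (connect_out_match Ha eaxa xm cax) (connect1 eaxa).
have Bxa_b := bracket_down HB By (connect_out_match Ha eaxa ym cay) connect_b_xa.
by move: Hab; rewrite -Bxa_a Bxa_b eqxx.
Qed.

Variables (R : numDomainType) (sigma : V -> R).

Definition score_gap (B : V -> V) : R :=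
  \sum_(y | is_match e y && connect e a y)
    ((if B y == a then sigma y else 0) - (if B y == b then sigma y else 0)).

Definition wins_above (B : V -> V) : R :=
  \sum_(y | is_match e y && connect e a y) (if B y == a then sigma y else 0).

Lemma score_force_sub (B : V -> V) :
  score e sigma (bracket_force e Bh a) B - score e sigma (bracket_force e Bh b) B
  = score_gap B.
Proof.
rewrite /score !big_mkcondr -sumrB /score_gap [RHS]big_mkcondr.
apply: eq_bigr => x xm; case: (boolP (connect e a x)) => cax; last first.
  by rewrite force_off_a ?subrr.
rewrite force_b_above_a // /bracket_force /Pl inE Ha cax.
by rewrite (eq_sym a) (eq_sym b).
Qed.

Hypothesis Hsigma : forall x, is_match e x -> 0 < sigma x.

Lemma sigma_if_ge0 (c : bool) y : is_match e y -> 0 <= if c then sigma y else 0.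
Proof. by move=> ym; case: c => //; apply: ltW (Hsigma ym). Qed.

Lemma gap_le_wins_above (B : V -> V) : score_gap B <= wins_above B.
Proof.
by apply: ler_sum => y /andP [ym _]; rewrite lerBlDr lerDl sigma_if_ge0.
Qed.

Lemma gap_wins_above (B : V -> V) x :
  is_bracket e B -> is_match e x -> B x = a -> score_gap B = wins_above B.
Proof.
move=> HB xm Bx; apply: eq_bigr => y /andP [ym cay].
by rewrite (negbTE (no_b_win_above_a HB xm Bx ym cay)) subr0.
Qed.

Lemma wins_above_lt (B B' : V -> V) x :
  is_bracket e B -> is_bracket e B' -> is_match e x -> B x = a -> B' x != a ->
  wins_above B' < wins_above B.
Proof.
move=> HB HB' xm Bx B'x.
have cax : connect e a x by rewrite -{1}Bx bracket_connect.
have Ix : is_match e x && connect e a x by rewrite xm cax.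
rewrite /wins_above (bigD1 x Ix) [X in _ < X](bigD1 x Ix) /=.
rewrite Bx eqxx (negbTE B'x) add0r ltr_pwDl ?Hsigma //.
apply: ler_sum => y /andP [/andP [ym cay] _].
case: eqP => [B'y|_]; last exact: sigma_if_ge0.
case/orP: (connect_comparable cax cay) => [cxy|cyx].
  by rewrite (bracket_down HB' B'y cxy cax) eqxx in B'x.
by rewrite (bracket_down HB Bx cyx cay) eqxx.
Qed.

Lemma bracket_win_of_gap_eq (B B' : V -> V) x :
  is_bracket e B -> is_bracket e B' -> score_gap B = score_gap B' ->
  is_match e x -> B x = a -> B' x = a.
Proof.
move=> HB HB' gapE xm Bx; case: (eqVneq (B' x) a) => // B'x.
have := le_lt_trans (gap_le_wins_above B') (wins_above_lt HB HB' xm Bx B'x).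
by rewrite -(gap_wins_above HB xm Bx) gapE ltxx.
Qed.

End Duel.

End SingleElimination.

Unset Implicit Arguments.

Theorem lemma5p9 (V : finType) (e : rel V) (R : realFieldType)
  (HT : single_elim e) (H2 : 2 <= #|V|)
  (Bh : V -> V) (HBh : is_bracket e Bh)
  (a b : V) (Ha : is_player e a) (Hb : is_player e b) (Hab : a != b)
  (Hxa : exists2 xa, e a xa & b \in [set Bh v | v in Nin e xa])
  (B B' : V -> V) (HB : is_bracket e B) (HB' : is_bracket e B')
  (sigma : V -> R) (Hsigma : forall x, is_match e x -> (0 < sigma x)%R)
  (Hsa : score e sigma (bracket_force e Bh a) B = score e sigma (bracket_force e Bh a) B')
  (Hsb : score e sigma (bracket_force e Bh b) B = score e sigma (bracket_force e Bh b) B') :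
  forall x, is_match e x -> (B x = a <-> B' x = a).
Proof.
move=> x xm; case: Hxa => xa eaxa /imsetP [v]; rewrite inE => evxa /esym Bhv.
have gapE : score_gap e a b sigma B = score_gap e a b sigma B'.
  by rewrite -!(score_force_sub HT HBh Ha Hb eaxa evxa Bhv) Hsa Hsb.
have win_keep := bracket_win_of_gap_eq HT HBh Ha Hab eaxa evxa Bhv Hsigma.
by split; [exact: win_keep HB HB' gapE xm | exact: win_keep HB' HB (esym gapE) xm].
Qed.
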